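(* Fix a decision epoch $k$, a look-ahead length $\ell\ge 1$ with $\mathcal T=\{0,\dots,\ell-1\}$, and a finite scenario set $\Omega_k$. Fix scenario-independent first-period delivery quantities $\bar u=(\bar u^{iv})_{i\in\mathcal N,v\in\mathcal V}$ with $\bar u^{iv}\ge 0$. For each scenario $\omega\in\Omega_k$, let $\mathrm{OS}(\omega;\bar u)$ denote problem $\mathrm{OS}(\omega)$ (defined in the context) with the additional constraints $u^{iv\omega}_{k,k}=\bar u^{iv}$ for all $i\in\mathcal N$, $v\in\mathcal V$, and assume $\mathrm{OS}(\omega;\bar u)$ has an optimal solution for every $\omega\in\Omega_k$. Let $Z^*(\omega)$ be the set of first-period routing vectors $(z^{ijv\omega}_{k,k})_{(i,j)\in E,v\in\mathcal V}$ that occur as the period-$k$ routing component of some optimal solution of $\mathrm{OS}(\omega;\bar u)$. Then $Z^*(\omega)=Z^*(\omega')$ for all $\omega,\omega'\in\Omega_k$. In other words, consistency of the first-period delivery variables $\mathbf u$ across all scenarios implies that a common (scenario-independent) optimal first-period routing $\mathbf z$ exists and the sets of optimal first-period routings coincide across scenarios.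
   Context: Retailers $\mathcal N=\{1,\dots,N\}$, warehouse $0$, $\mathcal N^+=\mathcal N\cup\{0\}$; edge set $E=\{(i,j): i,j\in\mathcal N^+, i\ne j\}$ with costs $c_{ij}\ge 0$; $\xi^+(i)$ (resp. $\xi^-(i)$) is the set of edges in $E$ starting (resp. ending) at $i$. Vehicles $\mathcal V=\{1,\dots,V\}$ with capacity $Q$; retailer inventory capacity $I^{\max}$; holding cost $h\ge0$, backorder cost $e\ge0$; $M$ a large constant; $x^+=\max\{x,0\}$, $x^-=\max\{-x,0\}$. Given initial inventories $\hat I^{i}_{k,k}$ (common to all scenarios) and, for scenario $\omega$, predicted demands $\hat y^{i\omega}_{k,k+t}\ge 0$, the single-scenario problem $\mathrm{OS}(\omega)$ has binary variables $z^{ijv\omega}_{k,k+t}$ (vehicle $v$ traverses edge $(i,j)$ in period $k+t$), nonnegative variables $u^{iv\omega}_{k,k+t}$ (quantity delivered to retailer $i$ by vehicle $v$ in period $k+t$), and inventory variables $\hat I^{i\omega}_{k,k+t}$, $t\in\mathcal T$ (plus $\hat I^{i\omega}_{k,k+\ell}$). It minimizes $\sum_{t\in\mathcal T}\sum_{(i,j)\in E}\sum_{v\in\mathcal V}c_{ij}z^{ijv\omega}_{k,k+t}+\sum_{t\in\mathcal T}\sum_{i\in\mathcal N}\big(h(\hat I^{i\omega}_{k,k+t+1})^++e(\hat I^{i\omega}_{k,k+t+1})^-\big)$ subject to, for all $t\in\mathcal T$, $v\in\mathcal V$, $i\in\mathcal N$: $\sum_{(0,j)\in\xi^+(0)}z^{0jv\omega}_{k,k+t}=\sum_{(j,0)\in\xi^-(0)}z^{j0v\omega}_{k,k+t}=1$;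 $\sum_{(i,j)\in\xi^+(i)}z^{ijv\omega}_{k,k+t}=\sum_{(j,i)\in\xi^-(i)}z^{jiv\omega}_{k,k+t}$; $\sum_{v\in\mathcal V}\sum_{(i,j)\in\xi^+(i)}z^{ijv\omega}_{k,k+t}\le1$; $u^{iv\omega}_{k,k+t}\le M\sum_{(i,j)\in\xi^+(i)}z^{ijv\omega}_{k,k+t}$; $\sum_{i\in\mathcal N}u^{iv\omega}_{k,k+t}\le Q$; $u^{iv\omega}_{k,k+t}\le I^{\max}-\hat I^{i\omega}_{k,k+t}$; $\hat I^{i\omega}_{k,k+t+1}=\hat I^{i\omega}_{k,k+t}+\sum_{v\in\mathcal V}u^{iv\omega}_{k,k+t}-\hat y^{i\omega}_{k,k+t}$ (with $\hat I^{i\omega}_{k,k}=\hat I^i_{k,k}$); subtour elimination $\sum_{i\in S}\sum_{j\in S,j\ne i}z^{ijv\omega}_{k,k+t}\le|S|-1$ for all $S\subset\mathcal N$ with $2\le|S|\le N$; $z^{ijv\omega}_{k,k+t}\in\{0,1\}$; $u^{iv\omega}_{k,k+t}\ge0$. Scenarios differ only in the demand values $\hat y^{i\omega}_{k,k+t}$. *)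

From HB Require Import structures.
From mathcomp Require Import all_boot all_order all_algebra.
Set Implicit Arguments. Unset Strict Implicit. Unset Printing Implicit Defensive.
Import Order.TTheory GRing.Theory Num.Theory.
Local Open Scope ring_scope.

(* Nodes: [None] is the warehouse 0, [Some i] is retailer i (i : 'I_N).  Periods k+t, t in T = {0,...,l-1}, encoded as 'I_L.+1
   with l = L.+1 (so l >= 1).  Inventories I_{k,k+t}, t = 0..l, are
   indexed by 'I_L.+2. *)
Definition node (N : nat) := option 'I_N.

Definition posp (R : numDomainType) (x : R) : R := Num.max x 0.
Definition negp (R : numDomainType) (x : R) : R := Num.max (- x) 0.

Record sol (R : numDomainType) (N V L : nat) := Sol {
  zv : 'I_L.+1 -> 'I_V -> node N -> node N -> bool;
  uv : 'I_L.+1 -> 'I_V -> 'I_N -> R;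
  Iv : 'I_L.+2 -> 'I_N -> R
}.

Definition outdeg N V L (R : numDomainType) (s : sol R N V L) t v (a : node N) : nat :=
  \sum_(j : node N | j != a) zv s t v a j.
Definition indeg N V L (R : numDomainType) (s : sol R N V L) t v (a : node N) : nat :=
  \sum_(j : node N | j != a) zv s t v j a.

Definition feasible (R : numDomainType) (N V L : nat)
  (Q Imax M : R) (I0 : 'I_N -> R)
  (y : 'I_L.+1 -> 'I_N -> R) (ubar : 'I_V -> 'I_N -> R)
  (s : sol R N V L) : Prop :=
  ( (* no self-loop variables: edges (i,i) are not in E *)
      (forall t v a, zv s t v a a = false) /\
      (forall t v, outdeg s t v None = 1%N /\ indeg s t v None = 1%N) /\
      (forall t v i, outdeg s t v (Some i) = indeg s t v (Some i)) /\
      (forall t i, (\sum_(v < V) outdeg s t v (Some i) <= 1)%N) /\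
      (forall t v i, uv s t v i <= M * (outdeg s t v (Some i))%:R
                     /\ 0 <= uv s t v i) /\
      (forall t v, \sum_(i < N) uv s t v i <= Q) /\
      (forall t v i, uv s t v i <= Imax - Iv s (inord t) i) /\
      (forall i, Iv s ord0 i = I0 i) /\
      (forall (t : 'I_L.+1) i, Iv s (inord t.+1) i =
          Iv s (inord t) i + \sum_(v < V) uv s t v i - y t i) /\
      (forall t v (S : {set 'I_N}), (2 <= #|S| <= N)%N ->
          (\sum_(i in S) \sum_(j in S | j != i) zv s t v (Some i) (Some j)
             <= #|S| - 1)%N) /\
      (forall v i, uv s ord0 v i = ubar v i)).

Definition cost (R : numDomainType) (N V L : nat)
  (c : node N -> node N -> R) (h e : R) (s : sol R N V L) : R :=
  \sum_(t < L.+1) \sum_(v < V) \sum_(a : node N) \sum_(b : node N | b != a)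
      c a b * (zv s t v a b)%:R
  + \sum_(t < L.+1) \sum_(i < N)
      (h * posp (Iv s (inord t.+1) i) + e * negp (Iv s (inord t.+1) i)).

Definition optimal (R : numDomainType) (N V L : nat)
  (c : node N -> node N -> R) (h e Q Imax M : R) (I0 : 'I_N -> R)
  (y : 'I_L.+1 -> 'I_N -> R) (ubar : 'I_V -> 'I_N -> R)
  (s : sol R N V L) : Prop :=
  feasible Q Imax M I0 y ubar s /\
  forall s' : sol R N V L, feasible Q Imax M I0 y ubar s' ->
    cost c h e s <= cost c h e s'.

Definition Zstar (R : numDomainType) (N V L : nat)
  (c : node N -> node N -> R) (h e Q Imax M : R) (I0 : 'I_N -> R)
  (y : 'I_L.+1 -> 'I_N -> R) (ubar : 'I_V -> 'I_N -> R)
  (zz : 'I_V -> node N -> node N -> bool) : Prop :=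
  exists s : sol R N V L, optimal c h e Q Imax M I0 y ubar s /\
    zz = zv s ord0.

From mathcomp Require Import all_boot all_order all_algebra.
From mathcomp Require Import ring lra.
Import Order.TTheory GRing.Theory Num.Theory.
Local Open Scope ring_scope.

(* Once the period-k deliveries are fixed to ubar, the period-k routing is
   coupled to the rest of a solution only through the linking constraints
   u <= M * outdeg, whose u-side is ubar in every scenario, and it enters
   the objective only through its own routing cost.  Hence the period-k
   routing of a feasible solution of one scenario can be grafted onto any
   feasible solution of another scenario; comparing costs shows that an
   optimal period-k routing of one scenario minimises the period-k routing
   cost over all routings compatible with ubar, and so is optimal for every
   scenario. *)

Section FirstRouting.
Variables (R : realFieldType) (N V L : nat).

Definition with_first_routing (s : sol R N V L)
    (z : 'I_V -> node N -> node N -> bool) : sol R N V L :=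
  Sol (fun t => if t == ord0 then z else zv s t) (uv s) (Iv s).

Definition first_routing_cost (c : node N -> node N -> R)
    (z : 'I_V -> node N -> node N -> bool) : R :=
  \sum_(v < V) \sum_(a : node N) \sum_(b : node N | b != a) c a b * (z v a b)%:R.

Lemma cost_with_first_routing c h e (s : sol R N V L) z :
  cost c h e (with_first_routing s z) =
  cost c h e s - first_routing_cost c (zv s ord0) + first_routing_cost c z.
Proof.
by rewrite /cost /first_routing_cost !big_ord_recl /=; ring.
Qed.

Lemma degs_eq_routing {s1 s2 : sol R N V L} {t} :
  zv s1 t = zv s2 t ->
  (forall v a, outdeg s1 t v a = outdeg s2 t v a) /\
  (forall v a, indeg s1 t v a = indeg s2 t v a).
Proof. by move=> eq_z; split=> v a; rewrite /outdeg /indeg eq_z. Qed.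

Lemma feasible_with_first_routing {Q Imax M I0 y1 y2 ubar} {s s' : sol R N V L} :
  feasible Q Imax M I0 y1 ubar s -> feasible Q Imax M I0 y2 ubar s' ->
  feasible Q Imax M I0 y2 ubar (with_first_routing s' (zv s ord0)).
Proof.
move=> [loop1 [depot1 [flow1 [visit1 [link1 [_ [_ [_ [_ [subtour1 ubar1]]]]]]]]]].
move=> [loop2 [depot2 [flow2 [visit2 [link2 [cap2 [inv2 [init2 [bal2 [subtour2 ubar2]]]]]]]]]].
set s'' := with_first_routing s' (zv s ord0).
pose src (t : 'I_L.+1) := if t == ord0 then s else s'.
have zv_src t : zv s'' t = zv (src t) t.
  by rewrite /s'' /src /=; case: eqP => // ->.
have out_src t := (degs_eq_routing (zv_src t)).1.
have in_src t := (degs_eq_routing (zv_src t)).2.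
split; first by move=> t v a; rewrite zv_src /src; case: (t == ord0).
split; first by move=> t v; rewrite out_src in_src /src; case: (t == ord0).
split; first by move=> t v i; rewrite out_src in_src /src; case: (t == ord0).
split.
  by move=> t i; under eq_bigr do rewrite out_src; rewrite /src; case: (t == ord0).
split.
  move=> t v i; rewrite out_src; split; last exact: (link2 t v i).2.
  rewrite /src; case: eqP => [->|_]; last exact: (link2 t v i).1.
  by rewrite /= ubar2 -ubar1; exact: (link1 ord0 v i).1.
do 4 (split; first by []).
split; last exact: ubar2.
move=> t v S cardS; under eq_bigr do under eq_bigr do rewrite zv_src.
by rewrite /src; case: (t == ord0); [apply: subtour1 | apply: subtour2].
Qed.

Lemma optimal_with_first_routing {c h e Q Imax M I0 y1 y2 ubar}
    {s s' : sol R N V L} :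
  optimal c h e Q Imax M I0 y1 ubar s -> optimal c h e Q Imax M I0 y2 ubar s' ->
  optimal c h e Q Imax M I0 y2 ubar (with_first_routing s' (zv s ord0)).
Proof.
move=> [feas_s opt_s] [feas_s' opt_s'].
split; first exact: feasible_with_first_routing feas_s feas_s'.
move=> s3 feas_s3.
have := opt_s _ (feasible_with_first_routing feas_s' feas_s).
have := opt_s' _ feas_s3.
rewrite !cost_with_first_routing; lra.
Qed.

Lemma Zstar_transfer c h e Q Imax M I0 (y1 y2 : 'I_L.+1 -> 'I_N -> R) ubar zz :
  (exists s : sol R N V L, optimal c h e Q Imax M I0 y2 ubar s) ->
  Zstar c h e Q Imax M I0 y1 ubar zz -> Zstar c h e Q Imax M I0 y2 ubar zz.
Proof.
move=> [s' opt_s'] [s [opt_s ->]].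
exists (with_first_routing s' (zv s ord0)).
by split; [apply: optimal_with_first_routing opt_s opt_s' | by []].
Qed.

End FirstRouting.

Theorem proposition1 (R : realFieldType) (N V L : nat) (Omega : finType)
  (c : node N -> node N -> R) (h e Q Imax M : R) (I0 : 'I_N -> R)
  (y : Omega -> 'I_L.+1 -> 'I_N -> R) (ubar : 'I_V -> 'I_N -> R)
  (hc : forall a b, 0 <= c a b) (hh : 0 <= h) (he : 0 <= e)
  (hy : forall w t i, 0 <= y w t i)
  (hubar : forall v i, 0 <= ubar v i)
  (hopt : forall w : Omega,
      exists s : sol R N V L, optimal c h e Q Imax M I0 (y w) ubar s) :
  forall (w w' : Omega) (zz : 'I_V -> node N -> node N -> bool),
    Zstar c h e Q Imax M I0 (y w) ubar zz <->
    Zstar c h e Q Imax M I0 (y w') ubar zz.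
Proof. by move=> w w' zz; split; apply: Zstar_transfer; apply: hopt. Qed.
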